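(* Let $\mathbf v=(v_1,\dots,v_m)$ and $\mathbf k=(k_1,\dots,k_m)$ be $m$-tuples of positive integers with $\mathbf v\ge\mathbf k$, and let $\mathbf r=(r_1,\dots,r_m)$ be a tuple of integers with $0\le r_i\le k_i-2$ for all $i$. Then $C(\mathbf v,\mathbf k,2)\le C(\mathbf v-\mathbf r,\mathbf k-\mathbf r,2)$.
   Context: For $m$-tuples $\mathbf a,\mathbf b$ of positive integers with $\mathbf b\le\mathbf a$ entrywise: let $X_1,\dots,X_m$ be pairwise disjoint sets with $|X_i|=a_i$; a block is an $m$-tuple $(B_1,\dots,B_m)$ with $B_i\subseteq X_i$, $|B_i|=b_i$; an $m$-tuple of sets $(T_1,\dots,T_m)$ is $(\mathbf a,\mathbf b,2)$-admissible if $T_i\subseteq X_i$, $|T_i|\le b_i$ and $\sum|T_i|=2$, and is contained in a block if $T_i\subseteq B_i$ for all $i$. A ${\rm GC}(\mathbf a,\mathbf b,2)$ is a finite family (repetitions allowed) of blocks containing every admissible tuple in at least one block; $C(\mathbf a,\mathbf b,2)$ is the minimum number of blocks. Vector subtraction is entrywise. *)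

From Stdlib Require Import ClassicalEpsilon.
From mathcomp Require Import all_boot.
Set Implicit Arguments. Unset Strict Implicit. Unset Printing Implicit Defensive.

(* The ground set: the disjoint union of X_1, ..., X_m with |X_i| = a_i,
   realised as the dependent pairs (i, x) with x : 'I_(a i).
   X_i is the set of points with tag i. *)
Definition ground (m : nat) (a : 'I_m -> nat) : finType := {i : 'I_m & 'I_(a i)}.

Definition part m (a : 'I_m -> nat) (S : {set ground a}) (i : 'I_m) : {set ground a} :=
  [set x in S | tag x == i].

(* A block (B_1,...,B_m), B_i ⊆ X_i, |B_i| = b_i, represented by the union of its parts. *)
Definition is_block m (a b : 'I_m -> nat) (B : {set ground a}) : bool :=
  [forall i, #|part B i| == b i].

(* An (a,b,2)-admissible tuple (T_1,...,T_m), T_i ⊆ X_i, |T_i| <= b_i, sum |T_i| = 2,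
   represented by the union of its parts (sum |T_i| = |T| by disjointness). *)
Definition admissible2 m (a b : 'I_m -> nat) (T : {set ground a}) : bool :=
  [forall i, #|part T i| <= b i] && (#|T| == 2).

(* A GC(a,b,2): a finite family (a sequence, repetitions allowed) of blocks such that
   every admissible tuple is contained (partwise) in some block. *)
Definition is_GC m (a b : 'I_m -> nat) (F : seq {set ground a}) : bool :=
  all (is_block b) F &&
  [forall T : {set ground a}, admissible2 b T ==> has (fun B : {set ground a} => T \subset B) F].

Definition has_GC_of_size m (a b : 'I_m -> nat) (n : nat) : bool :=
  [exists F : n.-tuple {set ground a}, is_GC b F].

(* C(a,b,2): the minimum number of blocks of a GC(a,b,2)
   (defaults to 0 if no GC exists, which does not happen when b <= a). *)
Definition C2 m (a b : 'I_m -> nat) : nat :=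
  match excluded_middle_informative (exists n, has_GC_of_size a b n) with
  | left h => ex_minn h
  | right _ => 0
  end.

From Stdlib Require Import ClassicalEpsilon.
From mathcomp Require Import all_boot zify.
Set Implicit Arguments. Unset Strict Implicit. Unset Printing Implicit Defensive.

(* Identify the ground set X_i' of size v_i - r_i with X_i minus r_i of its
   points, and let R be the set of all removed points. A block B of the smaller design becomes the block B ∪ R of the
   larger one, with k_i - r_i + r_i = k_i points in X_i. A pair T of the larger
   ground set meets X_i' in at most two points; padding these to a pair of the
   smaller design (possible since k_i - r_i >= 2) gives an admissible tuple,
   covered by some block B, and then T ⊆ B ∪ R. So a design with n blocks yields
   one with n blocks for the larger parameters. *)

Lemma subset_extend (T : finType) (A X : {set T}) n :
  A \subset X -> #|A| <= n <= #|X| ->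
  exists B : {set T}, [/\ A \subset B, B \subset X & #|B| = n].
Proof.
move=> AX /andP[An nX]; move Hd: (n - #|A|) => d.
elim: d A AX An Hd => [|d IH] A AX An Hd.
  by exists A; split=> //; apply/eqP; rewrite eqn_leq An -subn_eq0 Hd.
have ltAX : #|A| < #|X| by apply: leq_trans nX; rewrite -subn_gt0 Hd.
have /subsetPn[x xX xA] : ~~ (X \subset A).
  by apply/negP => /subset_leq_card; rewrite leqNgt ltAX.
have [|||B [xAB BX cardB]] := IH (x |: A); rewrite ?cardsU1 ?xA.
- by rewrite subUset sub1set xX AX.
- by lia.
- by lia.
by exists B; split=> //; apply: subset_trans xAB; apply: subsetUr.
Qed.

Section Parts.

Variables (m : nat) (a : 'I_m -> nat).

Definition fiber (i : 'I_m) : {set ground a} := [set x | tag x == i].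

Lemma card_fiber i : #|fiber i| = a i.
Proof.
have -> : fiber i = [set Tagged (fun j => 'I_(a j)) y | y in 'I_(a i)].
  apply/setP => -[j y]; rewrite !inE; apply/idP/imsetP => [/= /eqP ij|[z _ ->]] //.
  by subst j; exists y.
rewrite card_imset ?card_ord // => y z /eqP.
by rewrite -tag_eqE /tag_eq /= eqxx tagged_asE => /eqP.
Qed.

Lemma partE (S : {set ground a}) i : part S i = S :&: fiber i.
Proof. by apply/setP => x; rewrite !inE. Qed.

Lemma part_subset_fiber (S : {set ground a}) i : part S i \subset fiber i.
Proof. by rewrite partE subsetIr. Qed.

Lemma part_subset (S : {set ground a}) i : part S i \subset S.
Proof. by rewrite partE subsetIl. Qed.

Lemma partU (S S' : {set ground a}) i : part (S :|: S') i = part S i :|: part S' i.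
Proof. by apply/setP => x; rewrite !inE andb_orl. Qed.

Variable b : 'I_m -> nat.
Hypothesis leba : forall i, b i <= a i.

Lemma block_superset (T : {set ground a}) :
  (forall i, #|part T i| <= b i) -> exists2 B, is_block b B & T \subset B.
Proof.
move=> leTb.
have [A hA] : exists A : 'I_m -> {set ground a}, forall i,
    [/\ part T i \subset A i, A i \subset fiber i & #|A i| = b i].
  apply: (@fin_all_exists _ (fun _ => {set ground a}) (fun i B => [/\ part T i \subset B, B \subset fiber i & #|B| = b i])).
  move=> i; apply: subset_extend (part_subset_fiber T i) _.
  by rewrite leTb card_fiber leba.
have partA i : part (\bigcup_j A j) i = A i.
  have tagA j x : x \in A j -> tag x = j.
    by have [_ /subsetP AF _] := hA j => /AF; rewrite inE => /eqP.
  apply/setP => x; rewrite !inE; apply/andP/idP => [[/bigcupP[j _ xAj] /eqP <-]|xAi].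
    by rewrite (tagA j).
  by rewrite (tagA i) //; split=> //; apply/bigcupP; exists i.
exists (\bigcup_j A j).
  by apply/forallP => i; rewrite partA; have [_ _ ->] := hA i.
apply/subsetP => x xT; apply/bigcupP; exists (tag x) => //.
by have [/subsetP + _ _] := hA (tag x); apply; rewrite !inE xT eqxx.
Qed.

Lemma has_GC_of_some_size : exists n, has_GC_of_size a b n.
Proof.
set s := enum [set B : {set ground a} | is_block b B].
exists (size s); apply/existsP; exists (in_tuple s); apply/andP; split.
  by apply/allP => B; rewrite /= mem_enum inE.
apply/forallP => T; apply/implyP => /andP[/forallP leTb _].
by case: (block_superset leTb) => B isB TB; apply/hasP; exists B; rewrite ?mem_enum ?inE.
Qed.

Lemma has_GC_of_size_C2 : has_GC_of_size a b (C2 a b).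
Proof.
rewrite /C2; case: excluded_middle_informative => [ex|nex]; first by case: ex_minnP.
by case: nex; apply: has_GC_of_some_size.
Qed.

End Parts.

Lemma C2_min m (a b : 'I_m -> nat) n : has_GC_of_size a b n -> C2 a b <= n.
Proof.
move=> hn; rewrite /C2; case: excluded_middle_informative => [ex|nex].
  by case: ex_minnP => ? _ /(_ n hn).
by case: nex; exists n.
Qed.

Section Embedding.

Variables (m : nat) (v r : 'I_m -> nat).
Hypothesis lerv : forall i, r i <= v i.

Local Notation small := (ground (fun i => v i - r i)).

Definition embed (x : small) : ground v :=
  Tagged (fun i => 'I_(v i)) (widen_ord (leq_subr (r (tag x)) (v (tag x))) (tagged x)).

Definition removed : {set ground v} := [set x : ground v | v (tag x) - r (tag x) <= tagged x].

Lemma embed_inj : injective embed.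
Proof.
move=> [i y] [j z] /eqP; rewrite /embed -tag_eqE /tag_eq /= => /andP[/eqP ij].
by subst j; rewrite tagged_asE => /eqP/(congr1 val) /= yz; congr existT; apply: val_inj.
Qed.

Lemma embed_notin_removed x : embed x \notin removed.
Proof. by rewrite inE /= -ltnNge; case: x => i y /=. Qed.

Lemma notin_removed_embed (x : ground v) : x \notin removed -> {y | x = embed y}.
Proof.
case: x => i z; rewrite inE -ltnNge => lt_z.
by exists (Tagged (fun i => 'I_(v i - r i)) (Ordinal lt_z)); congr existT; apply: val_inj.
Qed.

Lemma embed_disjoint_removed (A : {set small}) (S : {set ground v}) :
  S \subset removed -> embed @: A :&: S = set0.
Proof.
move=> SR; apply/setP => x; rewrite !inE; apply/negbTE/andP.
by case=> /imsetP[y _ ->] /(subsetP SR); rewrite (negbTE (embed_notin_removed y)).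
Qed.

Lemma part_embed (B : {set small}) i : part (embed @: B) i = embed @: part B i.
Proof.
apply/setP => x; rewrite !inE; apply/andP/imsetP => [[/imsetP[y yB ->] yi]|].
  by exists y; rewrite // inE yB.
by case=> y /[!inE] /andP[yB yi] ->; split=> //; apply: imset_f.
Qed.

Lemma card_part_removed i : #|part removed i| = r i.
Proof.
have fiberE : fiber v i = embed @: fiber (fun i => v i - r i) i :|: part removed i.
  apply/setP => x; rewrite in_setU [x \in part _ _]inE [x \in fiber _ _]inE.
  have [xR|/notin_removed_embed[y ->]] /= := boolP (x \in removed).
    by case: imsetP => [[y _ xy]|//]; rewrite xy (negbTE (embed_notin_removed y)) in xR.
  rewrite orbF; apply/idP/imsetP => [yi|[z]].
    by exists y; rewrite ?inE.
  by rewrite inE => zi /embed_inj ->.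
have := card_fiber v i; rewrite fiberE cardsU embed_disjoint_removed ?part_subset //.
by rewrite card_imset ?card_fiber ?cards0; [have := lerv i; lia | apply: embed_inj].
Qed.

Definition lift_block (B : {set small}) : {set ground v} := embed @: B :|: removed.

Lemma is_block_lift (k : 'I_m -> nat) B :
  (forall i, r i <= k i) -> is_block (fun i => k i - r i) B -> is_block k (lift_block B).
Proof.
move=> lerk /forallP isB; apply/forallP => i.
rewrite partU part_embed cardsU card_imset ?embed_disjoint_removed ?part_subset //.
  by rewrite (eqP (isB i)) card_part_removed cards0 subn0 subnK.
exact: embed_inj.
Qed.

Lemma preimage_subset_admissible (k : 'I_m -> nat) (T : {set ground v}) :
  (forall i, r i + 2 <= k i) -> (forall i, k i <= v i) -> #|T| = 2 ->
  exists2 T' : {set small}, admissible2 (fun i => k i - r i) T' & embed @^-1: T \subset T'.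
Proof.
move=> lerk lekv cardT.
have card_pre : #|embed @^-1: T| <= 2.
  rewrite -cardT -(card_imset _ embed_inj); apply: subset_leq_card.
  by apply/subsetP => _ /imsetP[y /[!inE] yT ->].
have [x _] : exists x, x \in T by apply/set0Pn; rewrite -card_gt0 cardT.
have two_le_small : 2 <= #|[set: small]|.
  apply: leq_trans (subset_leq_card (subsetT (fiber (fun i => v i - r i) (tag x)))).
  by rewrite card_fiber; have := lerk (tag x); have := lekv (tag x); lia.
have [T' [preT' _ cardT']] := subset_extend (subsetT _) (introT andP (conj card_pre two_le_small)).
exists T' => //; rewrite /admissible2 cardT' eqxx andbT; apply/forallP => i.
by rewrite (leq_trans (subset_leq_card (part_subset T' i))) // cardT'; have := lerk i; lia.
Qed.

Lemma is_GC_lift (k : 'I_m -> nat) (F : seq {set small}) :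
  (forall i, r i + 2 <= k i) -> (forall i, k i <= v i) ->
  is_GC (fun i => k i - r i) F -> is_GC k (map lift_block F).
Proof.
move=> lerk lekv /andP[/allP blocksF /forallP coverF]; apply/andP; split.
  apply/allP => _ /mapP[B BF ->]; apply: is_block_lift; last exact: blocksF.
  by move=> i; have := lerk i; lia.
apply/forallP => T; apply/implyP => /andP[_ /eqP cardT].
have [T' admT' preT'] := preimage_subset_admissible lerk lekv cardT.
have /hasP[B BF T'B] := implyP (coverF T') admT'.
apply/hasP; exists (lift_block B); first exact: map_f.
apply/subsetP => x xT; rewrite in_setU.
have [_|/notin_removed_embed[y xy]] := boolP (x \in removed); first by rewrite orbT.
by rewrite orbF xy imset_f // (subsetP T'B) // (subsetP preT') // inE -xy.
Qed.

End Embedding.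

Theorem proposition3p23 (m : nat) (v k r : 'I_m -> nat)
  (hk : forall i, 0 < k i) (hkv : forall i, k i <= v i)
  (hr : forall i, r i + 2 <= k i) :
  C2 v k <= C2 (fun i => v i - r i) (fun i => k i - r i).
Proof.
have lerv i : r i <= v i by have := hr i; have := hkv i; lia.
have lekv_sub i : k i - r i <= v i - r i by apply: leq_sub2r.
have /existsP[F isGC_F] := has_GC_of_size_C2 lekv_sub.
apply: C2_min; apply/existsP; exists (map_tuple (@lift_block _ v r) F).
exact: is_GC_lift.
Qed.
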